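(* Let $d\ge3$, $\alpha<2$ and $q>\frac{d-\alpha}{d-2}$. Then there exists a positive function $u$ on $\mathbb Z^d$ satisfying $\Delta u(x)+(1+|x|)^{-\alpha}u(x)^q\le0$ for all $x\in\mathbb Z^d$.
   Context: $\mathbb Z^d$ is the lattice graph with $\mu_{xy}=1$ if $\|x-y\|_1=1$ and $\mu_{xy}=0$ otherwise, so $\mu(x)=2d$ and $\Delta u(x)=\frac1{2d}\sum_{y:\|y-x\|_1=1}(u(y)-u(x))$. $|x|$ is the Euclidean norm. *)

From HB Require Import structures.
From mathcomp Require Import all_boot all_order all_algebra.
From mathcomp Require Import all_classical all_reals all_analysis.
Set Implicit Arguments. Unset Strict Implicit. Unset Printing Implicit Defensive.
Import Order.TTheory GRing.Theory Num.Theory.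
Local Open Scope ring_scope.

Definition lattice (d : nat) := 'rV[int]_d.

Definition unitv (d : nat) (i : 'I_d) : lattice d := \row_j (i == j)%:R.

(* Normalized graph Laplacian on Z^d with mu_xy = 1 for nearest neighbours:
   Delta u(x) = 1/(2d) * sum_{|y-x|_1 = 1} (u y - u x),
   the neighbours being exactly x + e_i and x - e_i, i < d. *)
Definition lapZd (R : realType) (d : nat) (u : lattice d -> R) (x : lattice d) : R :=
  (2 * d%:R)^-1 * \sum_(i < d) ((u (x + unitv i) - u x) + (u (x - unitv i) - u x)).

Definition eucl (R : realType) (d : nat) (x : lattice d) : R :=
  Num.sqrt (\sum_(i < d) ((x ord0 i)%:~R : R) ^+ 2).

From HB Require Import structures.
From mathcomp Require Import all_boot all_order all_algebra.
From mathcomp Require Import all_classical all_reals all_analysis.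
From mathcomp Require Import ring lra.
Import Order.TTheory GRing.Theory Num.Theory.
Local Open Scope classical_set_scope.
Local Open Scope ring_scope.

(* Take u(x) = E (A + |x|^2)^(-g) with (2 - alpha) / (2 (q - 1)) < g < (d - 2) / 2;
   this window is nonempty exactly when q > (d - alpha) / (d - 2).  A second-order
   Taylor bound for t |-> t^(-g), whose remainder is controlled as long as the
   neighbouring values of A + |x|^2 stay within a factor m of the central one, gives
   Delta u <= -kappa u / (A + |x|^2) for A large; kappa > 0 because 2 (g + 1) < d.
   The weight (1 + |x|)^(-alpha) is comparable to (A + |x|^2)^(-alpha/2), and
   g q + alpha/2 >= g + 1, so the nonlinear term is at most E^(q-1) times a constant
   times u / (A + |x|^2), which a small E makes smaller than kappa u / (A + |x|^2). *)

Section PowerBounds.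
Context {R : realType}.
Implicit Types y z p m g : R.

Lemma ln_le_subr1 y : 0 < y -> ln y <= y - 1.
Proof. by move=> y0; have := @le_ln1Dx R (y - 1); rewrite addrCA subrr addr0; apply; lra. Qed.

Lemma tangent_le_powRN y p : 0 < y -> 0 <= p -> 1 - p * (y - 1) <= y `^ (- p).
Proof.
move=> y0 p0; rewrite /powR gt_eqF //; apply: le_trans (expR_ge1Dx _).
have := ln_le_subr1 y y0; nra.
Qed.

Lemma powRN_subr1_le y p : 0 < y -> 0 <= p ->
  y `^ (- p) - 1 <= p * (1 - y) * y `^ (- (p + 1)).
Proof.
move=> y0 p0; have yV0 : 0 < y^-1 by rewrite invr_gt0.
have yVp : y^-1 `^ (- p) = y `^ p.
  by rewrite /powR !gt_eqF // lnV ?posrE // mulrNN.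
have yNp : y `^ (- p) * y `^ p = 1.
  by rewrite -powRD ?addNr ?powRr0 // (gt_eqF y0) implybT.
have yNp1 : y `^ (- (p + 1)) = y `^ (- p) * y^-1.
  by rewrite opprD powRD ?powR_inv1 ?ltW // (gt_eqF y0) implybT.
have yV : (1 - y) * y^-1 = y^-1 - 1 by rewrite mulrBl mul1r mulfV ?gt_eqF.
(* the tangent bound at [y^-1], rescaled by [y^-p] *)
have := ler_wpM2l (powR_ge0 y (- p)) (tangent_le_powRN _ p yV0 p0).
rewrite yVp yNp yNp1; set a := y `^ (- p).
have -> : p * (1 - y) * (a / y) = p * a * ((1 - y) / y) by ring.
rewrite yV; lra.
Qed.

Lemma powRN_le m y p : 0 < m -> m <= y -> 0 <= p -> y `^ (- p) <= m `^ (- p).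
Proof.
move=> m0 my p0; have y0 : 0 < y by apply: lt_le_trans my.
rewrite !powRN lef_pV2 ?posrE ?powR_gt0 //.
by apply: (ge0_ler_powR p0); rewrite // nnegrE ltW.
Qed.

Lemma powRN_le_taylor2 g m z : 0 < g -> 0 < m -> m <= 1 -> m <= z ->
  z `^ (- g) <= 1 - g * (z - 1) + g * (g + 1) / 2 * m `^ (- (g + 2)) * (z - 1) ^+ 2.
Proof.
move=> g0 m0 m1 mz; have z0 : 0 < z by apply: lt_le_trans mz.
have g1 : 0 <= g + 1 by lra.
have mu1 : 1 <= m `^ (- (g + 2)).
  by rewrite -[X in X <= _](powRr0 m) ger_powR ?m0 //; lra.
set C := g * (g + 1) / 2 * _.
(* The gap [G] vanishes at 1, decreases on [m, 1] and increases on [1, +oo). *)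
pose G y := 1 - g * (y - 1) + C * (y - 1) ^+ 2 - y `^ (- g).
pose G' y := - g + 2 * C * (y - 1) + g * y `^ (- (g + 1)).
have dG y : 0 < y -> is_derive y 1 G (G' y).
  move=> y0; have := is_derive1_powR (- g) y0 => dP.
  by apply: is_derive_eq; rewrite /G' /GRing.scale /= opprD; ring.
have G'_val y : 0 < y -> G^`()%classic y = G' y.
  by move=> y0; have := dG y y0 => dGy; rewrite derive1E derive_val.
have dG_in a b : 0 < a -> forall y, y \in `]a, b[ -> derivable G y 1.
  by move=> a0 y; rewrite in_itv /= => /andP[ay _]; have [] := dG y (lt_trans a0 ay).
have contG a b : 0 < a -> {within `[a, b], continuous G}.
  move=> a0; apply: derivable_within_continuous => y; rewrite in_itv /= => /andP[ay _].
  by have [] := dG y (lt_le_trans a0 ay).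
have G1 : G 1 = 0 by rewrite /G powR1 subrr mulr0 expr0n /= mulr0 !subr0 addr0 subrr.
suff : G 1 <= G z by rewrite G1 /G subr_ge0.
have [z1|z1] := leP 1 z.
  have G'_ge0 y : y \in `]1, z[ -> 0 <= G^`()%classic y.
    rewrite in_itv /= => /andP[y1 _]; have y0 : 0 < y by apply: lt_trans y1.
    rewrite G'_val // /G'.
    have := ler_wpM2l (ltW g0) (tangent_le_powRN y _ y0 g1).
    have : 0 <= g * (g + 1) * (y - 1) * (m `^ (- (g + 2)) - 1).
      by rewrite !mulr_ge0 //; lra.
    rewrite /C; lra.
  apply: (ger0_derive1_le_cc (dG_in 1 z ltr01) G'_ge0 (contG 1 z ltr01)) => //;
    by rewrite ?in_itv /= ?lexx z1.
have G'_le0 y : y \in `]z, 1[ -> G^`()%classic y <= 0.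
  rewrite in_itv /= => /andP[zy y1]; have y0 : 0 < y by apply: lt_trans zy.
  rewrite G'_val // /G'.
  have := ler_wpM2l (ltW g0) (powRN_subr1_le y _ y0 g1).
  have -> : g + 1 + 1 = g + 2 by rewrite -addrA.
  have : 0 <= g * (g + 1) * (1 - y) * (m `^ (- (g + 2)) - y `^ (- (g + 2))).
    by rewrite !mulr_ge0 ?subr_ge0 //; [lra | lra | apply: powRN_le; lra].
  rewrite /C; lra.
apply: (ler0_derive1_le_cc (dG_in z 1 z0) G'_le0 (contG z 1 z0)) => //;
  by rewrite ?in_itv /= ?lexx (ltW z1).
Qed.

Lemma powRN_shift_le g m T h : 0 < g -> 0 < m -> m <= 1 -> 0 < T -> m * T <= T + h ->
  (T + h) `^ (- g) <=
  T `^ (- g) * (1 - g * (h / T) + g * (g + 1) / 2 * m `^ (- (g + 2)) * (h / T) ^+ 2).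
Proof.
move=> g0 m0 m1 T0 mT.
have Th : T + h = T * ((T + h) / T) by rewrite mulrC divfK ?gt_eqF.
have hT : (T + h) / T - 1 = h / T by rewrite mulrDl divff ?gt_eqF // addrC addKr.
have Th0 : 0 < T + h by apply: lt_le_trans mT; exact: mulr_gt0.
rewrite {1}Th powRM; [|exact: ltW|exact/ltW/divr_gt0].
apply: ler_wpM2l; first exact: powR_ge0.
by rewrite -hT; apply: powRN_le_taylor2; rewrite // ler_pdivlMr.
Qed.
End PowerBounds.

Section SquaredNorm.
Context {R : realType} {d : nat}.
Implicit Types x y : lattice d.

Definition sqnorm x : R := \sum_(i < d) ((x ord0 i)%:~R : R) ^+ 2.

Lemma sqnorm_ge0 x : 0 <= sqnorm x.
Proof. by apply: sumr_ge0 => i _; rewrite sqr_ge0. Qed.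

Lemma sqr_coord_le_sqnorm x i : ((x ord0 i)%:~R : R) ^+ 2 <= sqnorm x.
Proof. by rewrite /sqnorm (bigD1 i) //= lerDl; apply: sumr_ge0 => j _; rewrite sqr_ge0. Qed.

Lemma sqnorm_shift x y i (c : int) :
  (forall j, y ord0 j = x ord0 j + (i == j)%:R * c) ->
  sqnorm y = sqnorm x + 2 * (x ord0 i)%:~R * c%:~R + c%:~R ^+ 2.
Proof.
move=> yE; rewrite /sqnorm (bigD1 i) //= [in RHS](bigD1 i) //= yE eqxx mul1r intrD.
rewrite (eq_bigr (fun j => ((x ord0 j)%:~R : R) ^+ 2)); first by ring.
by move=> j ji; rewrite yE eq_sym (negbTE ji) mul0r addr0.
Qed.

Lemma sqnormD_unitv x i : sqnorm (x + unitv i) = sqnorm x + 2 * (x ord0 i)%:~R + 1.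
Proof. by rewrite (@sqnorm_shift x _ i 1) ?mulr1 ?expr1n // => j; rewrite !mxE mulr1. Qed.

Lemma sqnormB_unitv x i : sqnorm (x - unitv i) = sqnorm x - 2 * (x ord0 i)%:~R + 1.
Proof.
rewrite (@sqnorm_shift x _ i (-1)); last by move=> j; rewrite !mxE mulrN1.
by rewrite sqrrN expr1n mulrN1 -mulrN.
Qed.
End SquaredNorm.

Definition profile {R : realType} {d : nat} (A g : R) (x : lattice d) : R :=
  (A + sqnorm x) `^ (- g).

Lemma lapZdZ {R : realType} {d : nat} (c : R) (u : lattice d -> R) x :
  lapZd (fun y => c * u y) x = c * lapZd u x.
Proof. by rewrite /lapZd !mulr_sumr; apply: eq_bigr => i _; ring. Qed.

Section ProfileLaplacian.
Context {R : realType} {d : nat} {g m A : R}.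
Hypotheses (d_gt0 : (0 < d)%N) (g_gt0 : 0 < g) (m_gt0 : 0 < m) (m_lt1 : m < 1).
Hypothesis A_large : 1 <= (1 - m) ^+ 2 * A.
Implicit Types x : lattice d.

Let C := g * (g + 1) / 2 * m `^ (- (g + 2)).

Let A_gt0 : 0 < A.
Proof.
rewrite -(@pmulr_rgt0 _ ((1 - m) ^+ 2)) ?exprn_gt0 ?subr_gt0 //.
exact: lt_le_trans ltr01 A_large.
Qed.

Lemma neighbour_ratio_ge s X : X ^+ 2 <= s -> m * (A + s) <= A + s + (2 * X + 1).
Proof.
move=> Xs; set k := 1 - m; have k0 : 0 < k by rewrite subr_gt0.
have : 0 <= k * (k * (A + X ^+ 2) + 2 * X).
  have -> : k * (k * (A + X ^+ 2) + 2 * X) = (k ^+ 2 * A - 1) + (k * X + 1) ^+ 2 by ring.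
  by rewrite addr_ge0 ?sqr_ge0 // subr_ge0.
rewrite pmulr_rge0 // => h.
have : k * (A + X ^+ 2) <= k * (A + s) by rewrite ler_pM2l // lerD2l.
rewrite /k in h * => hs; lra.
Qed.

Lemma lapZd_profile_le x :
  lapZd (profile A g) x <=
  - (g - 4 * C / d%:R - C / A) * (profile A g x / (A + sqnorm x)).
Proof.
set s := sqnorm x; set T := A + s; set P := profile A g x; rewrite -[_ / T]/(P * T^-1).
set r := T^-1.
have s0 : 0 <= s := sqnorm_ge0 x.
have T0 : 0 < T by rewrite /T; have := A_gt0; lra.
have r0 : 0 < r by rewrite invr_gt0.
have P0 : 0 < P by apply: powR_gt0.
have C0 : 0 <= C.
  by rewrite /C mulr_ge0 ?powR_ge0 // divr_ge0 // mulr_ge0 ?addr_ge0 ?ltW.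
(* at the neighbours [x + e_i] and [x - e_i] the first-order terms [+/- 2 x_i] cancel *)
pose a := P * (- (2 * g) * r + 2 * C * r ^+ 2); pose b := 8 * C * P * r ^+ 2.
have term i : (profile A g (x + unitv i) - P) + (profile A g (x - unitv i) - P)
    <= a + b * ((x ord0 i)%:~R) ^+ 2.
  set X := ((x ord0 i)%:~R : R); have Xs : X ^+ 2 <= s := sqr_coord_le_sqnorm x i.
  have [Xp Xm] : m * T <= T + (2 * X + 1) /\ m * T <= T + (2 * - X + 1).
    by split; apply: neighbour_ratio_ge; rewrite ?sqrrN.
  rewrite /profile sqnormD_unitv sqnormB_unitv -/s.
  have -> : A + (s + 2 * X + 1) = T + (2 * X + 1) by rewrite /T; ring.
  have -> : A + (s - 2 * X + 1) = T + (2 * - X + 1) by rewrite /T; ring.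
  have := powRN_shift_le g m T _ g_gt0 m_gt0 (ltW m_lt1) T0 Xp.
  have := powRN_shift_le g m T _ g_gt0 m_gt0 (ltW m_lt1) T0 Xm.
  rewrite -/C -[T `^ (- g)]/P /a /b -/r; lra.
rewrite /lapZd -/P.
apply: le_trans (ler_wpM2l _ (ler_sum _ (fun i _ => term i))) _.
  by rewrite invr_ge0 mulr_ge0 ?ler0n.
rewrite big_split /= sumr_const card_ord -mulr_sumr -/(sqnorm x) -/s -[a *+ d]mulr_natr.
have d0 : d%:R != 0 :> R by rewrite pnatr_eq0 -lt0n.
have -> : (2 * d%:R)^-1 * (a * d%:R + b * s) =
    P * r * (- g + C * r + 4 * C / d%:R * (s * r)) by rewrite /a /b; field.
rewrite mulrC; apply: ler_wpM2r; first by rewrite mulr_ge0 // ltW.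
have rA : C * r <= C / A.
  by rewrite ler_wpM2l // lef_pV2 ?posrE ?A_gt0 // /T lerDl.
have rs : 4 * C / d%:R * (s * r) <= 4 * C / d%:R.
  rewrite -[X in _ <= X]mulr1; apply: ler_wpM2l.
    exact: divr_ge0 (mulr_ge0 (ler0n _ 4) C0) (ler0n _ _).
  by rewrite ler_pdivrMr // mul1r /T lerDr; exact: ltW A_gt0.
lra.
Qed.
End ProfileLaplacian.

Lemma exists_powRN_lt {R : realType} (p M : R) :
  0 < p -> 1 < M -> exists2 m, 0 < m < 1 & m `^ (- p) < M.
Proof.
move=> p0 M1; set mu := (1 + M) / 2; have mu1 : 1 < mu by rewrite /mu; lra.
exists (mu `^ (- p^-1)).
  rewrite powR_gt0 /=; last lra.
  by rewrite /powR gt_eqF ?expR_lt1 ?mulNr ?oppr_lt0 ?mulr_gt0 ?invr_gt0 ?ln_gt0 //; lra.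
rewrite -powRrM mulrNN mulVf ?gt_eqF // powRr1 /mu; lra.
Qed.

Lemma exists_lapZd_profile_le {R : realType} {d : nat} {g : R} :
  0 < g -> 2 * (g + 1) < d%:R ->
  exists A kappa, [/\ 1 <= A, 0 < kappa &
    forall x : lattice d, lapZd (profile A g) x <= - kappa * (profile A g x / (A + sqnorm x))].
Proof.
move=> g0 gd; have D0 : 0 < d%:R :> R by apply: lt_trans gd; rewrite mulr_gt0 //; lra.
have [m /andP[m0 m1] mu_lt] : exists2 m, 0 < m < 1 & m `^ (- (g + 2)) < d%:R / (2 * (g + 1)).
  by apply: exists_powRN_lt; rewrite ?ltr_pdivlMr ?mul1r //; lra.
set C := g * (g + 1) / 2 * m `^ (- (g + 2)).
have C0 : 0 < C by rewrite /C mulr_gt0 ?powR_gt0 // divr_gt0 // mulr_gt0 //; lra.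
set delta := g - 4 * C / d%:R.
have delta0 : 0 < delta.
  move: mu_lt; rewrite /delta subr_gt0 ltr_pdivrMr // ltr_pdivlMr; last lra.
  have -> : 4 * C = g * (m `^ (- (g + 2)) * (2 * (g + 1))) by rewrite /C; field.
  by rewrite ltr_pM2l.
set A := (1 - m) ^- 2 + 2 * C / delta.
have CA0 : 0 <= 2 * C / delta := divr_ge0 (mulr_ge0 (ler0n R 2) (ltW C0)) (ltW delta0).
have A1 : 1 <= A.
  have : 1 <= (1 - m) ^- 2.
    by rewrite invf_ge1 ?exprn_gt0 ?subr_gt0 // expr_le1 ?subr_ge0 ?gerBl ?ltW.
  rewrite /A; lra.
have A0 : 0 < A := lt_le_trans ltr01 A1.
have A_large : 1 <= (1 - m) ^+ 2 * A.
  by rewrite mulrDr mulfV ?expf_neq0 ?subr_eq0 ?gt_eqF // lerDl mulr_ge0 ?sqr_ge0.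
have CA : C / A <= delta / 2.
  rewrite ler_pdivrMr //.
  have : 2 * C / delta * delta <= A * delta.
    apply: ler_wpM2r; first exact: ltW.
    by rewrite /A lerDr invr_ge0 exprn_ge0 // subr_ge0 ltW.
  rewrite divfK ?gt_eqF //; lra.
exists A; exists (delta / 2); split => //; first by rewrite divr_gt0.
move=> x; have d_gt0 : (0 < d)%N by rewrite -(ltr0n R).
apply: le_trans (lapZd_profile_le d_gt0 g0 m0 m1 A_large x) _.
have T0 : 0 < A + sqnorm x := ltr_wpDr (sqnorm_ge0 x) A0.
rewrite -/C -/delta; apply: ler_wpM2r; first exact: divr_ge0 (powR_ge0 _ _) (ltW T0).
lra.
Qed.

Section SourceTerm.
Context {R : realType} {d : nat}.

Lemma weight_le (A e alpha : R) : 1 <= A -> 0 <= e ->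
  (1 + e) `^ (- alpha) <= (2 * A) `^ (`|alpha| / 2) * (A + e ^+ 2) `^ (- alpha / 2).
Proof.
move=> A1 e0; set T := A + e ^+ 2.
have A0 : 0 < A by apply: lt_le_trans A1.
have T0 : 0 < T := ltr_wpDr (sqr_ge0 e) A0.
have e1 : 0 < 1 + e by rewrite ltr_pwDl.
have sqr_le2T : (1 + e) ^+ 2 <= 2 * T.
  by have := sqr_ge0 (e - 1); rewrite /T; lra.
have T_le : T <= A * (1 + e) ^+ 2.
  have := mulr_ge0 (ltW A0) e0.
  have : 0 <= (A - 1) * e ^+ 2 by rewrite mulr_ge0 ?sqr_ge0 ?subr_ge0.
  rewrite /T; lra.
set l := ln (1 + e); set L := ln T.
have l_le : 2 * l <= ln 2 + L.
  by rewrite [2 * l]mulr_natl -lnXn // -lnM ?posrE // ler_ln ?posrE ?exprn_gt0 ?mulr_gt0.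
have l_ge : L - ln A <= 2 * l.
  rewrite [2 * l]mulr_natl -lnXn // -ln_div ?posrE //.
  by rewrite ler_ln ?posrE ?exprn_gt0 ?divr_gt0 // ler_pdivrMr // mulrC.
have ln2 : 0 <= ln (2 : R) by apply: ln_ge0; lra.
have lnA : 0 <= ln A := ln_ge0 A1.
rewrite /powR !gt_eqF ?mulr_gt0 // -expRD ler_expR lnM ?posrE // -/l -/L.
have [alpha0|alpha0] := leP 0 alpha.
  have := ler_wpM2l alpha0 l_ge; have := mulr_ge0 alpha0 ln2.
  rewrite ger0_norm //; lra.
have alphaN : 0 <= - alpha by rewrite oppr_ge0 ltW.
have := ler_wpM2l alphaN l_le; have := mulr_ge0 alphaN lnA.
rewrite ltr0_norm //; lra.
Qed.

Lemma powR_source_le (T E g q a : R) : 1 <= T -> 0 < E -> g + 1 <= a + g * q ->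
  T `^ (- a) * (E * T `^ (- g)) `^ q <= E `^ (q - 1) * (E * T `^ (- g) / T).
Proof.
move=> T1 E0 gq; have T0 : 0 < T by apply: lt_le_trans T1.
have powRDT r s : T `^ (r + s) = T `^ r * T `^ s by rewrite powRD // (gt_eqF T0) implybT.
have Eq : E `^ q = E `^ (q - 1) * E.
  by rewrite -{3}(powRr1 (ltW E0)) -powRD ?subrK // (gt_eqF E0) implybT.
rewrite powRM; [|exact: ltW|exact: powR_ge0].
rewrite -powRrM Eq -mulrA mulrCA -[E * T `^ (- g) / T]mulrA.
apply: ler_wpM2l; first exact: powR_ge0.
rewrite mulrCA; apply: ler_wpM2l; first exact: ltW.
rewrite -powRDT -(powR_inv1 (ltW T0)) -powRDT; apply: (ler_powR T1); lra.
Qed.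

Lemma source_term_le (alpha : R) (x : lattice d) {A E g q : R} :
  1 <= A -> 0 < E -> 1 - alpha / 2 <= g * (q - 1) ->
  (1 + eucl R x) `^ (- alpha) * (E * profile A g x) `^ q <=
  (2 * A) `^ (`|alpha| / 2) * E `^ (q - 1) * (E * (profile A g x / (A + sqnorm x))).
Proof.
move=> A1 E0 gq; have T1 : 1 <= A + sqnorm x := ler_wpDr (sqnorm_ge0 x) A1.
have weight := weight_le A _ alpha A1 (sqrtr_ge0 (sqnorm x)).
rewrite sqr_sqrtr ?sqnorm_ge0 // mulNr in weight.
apply: le_trans (ler_wpM2r (powR_ge0 _ _) weight) _.
rewrite -!mulrA; apply: ler_wpM2l; first exact: powR_ge0.
by rewrite [E * (_ / _)]mulrA; apply: powR_source_le => //; lra.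
Qed.
End SourceTerm.

Lemma exponent_choice {R : realType} {D alpha q : R} :
  2 < D -> alpha < 2 -> (D - alpha) / (D - 2) < q ->
  exists g, [/\ 0 < g, 2 * (g + 1) < D & 1 - alpha / 2 < g * (q - 1)].
Proof.
move=> D2 alpha2; have D20 : 0 < D - 2 by rewrite subr_gt0.
rewrite ltr_pdivrMr // => hq.
have gap : 2 - alpha < (q - 1) * (D - 2) by lra.
have q1 : 0 < q - 1 by rewrite -(pmulr_lgt0 _ D20); lra.
set a0 := (2 - alpha) / (2 * (q - 1)).
have a0_gt0 : 0 < a0 by rewrite divr_gt0 ?mulr_gt0 //; lra.
have a0_lt : a0 < (D - 2) / 2 by rewrite ltr_pdivrMr ?ltr_pdivlMr ?mulr_gt0 //; lra.
exists ((a0 + (D - 2) / 2) / 2); split; [lra | lra |].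
have -> : 1 - alpha / 2 = a0 * (q - 1) by rewrite /a0; field; rewrite gt_eqF.
by rewrite ltr_pM2r //; lra.
Qed.

Theorem theorem7p5 (R : realType) (d : nat) (alpha q : R) :
  (3 <= d)%N -> alpha < 2 -> (d%:R - alpha) / (d%:R - 2) < q ->
  exists u : lattice d -> R,
    (forall x, 0 < u x) /\
    (forall x, lapZd u x + powR (1 + eucl R x) (- alpha) * powR (u x) q <= 0).
Proof.
move=> d3 alpha2 hq; have D2 : 2 < d%:R :> R by rewrite ltr_nat.
have [g [g0 gd gq]] := exponent_choice D2 alpha2 hq.
have q1 : 0 < q - 1 by rewrite -(pmulr_rgt0 _ g0); lra.
have [A [kappa [A1 kappa0 lap_le]]] := exists_lapZd_profile_le g0 gd.
set W := (2 * A) `^ (`|alpha| / 2); have W0 : 0 < W by rewrite powR_gt0 // mulr_gt0 //; lra.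
set E := (kappa / W) `^ (q - 1)^-1; have E0 : 0 < E by rewrite powR_gt0 // divr_gt0.
have EW : W * E `^ (q - 1) = kappa.
  rewrite -powRrM mulVf ?gt_eqF // powRr1 ?divr_ge0 ?ltW //.
  by rewrite mulrC divfK ?gt_eqF.
exists (fun x => E * profile A g x); split => x.
  by rewrite mulr_gt0 // powR_gt0 // (lt_le_trans ltr01 (ler_wpDr (sqnorm_ge0 x) A1)).
have -> : lapZd (fun y => E * profile A g y) x = E * lapZd (profile A g) x := lapZdZ _ _ x.
have := source_term_le alpha x A1 E0 (ltW gq); rewrite -/W EW => source.
apply: le_trans (lerD (ler_wpM2l (ltW E0) (lap_le x)) source) _.
by rewrite mulNr mulrN mulrCA addNr.
Qed.
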